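(* Let $K_0$ be a finite extension of $\mathbb{Q}_2$ with absolute ramification index $e_0$, and let $K_2/K_0$ be a totally ramified cyclic extension of degree $4$ with Galois group generated by $\sigma$, with intermediate field $K_1$ (the fixed field of $\sigma^2$), whose lower ramification break numbers $b_1<b_2$ are odd with $b_1>e_0$ and $b_2=b_1+2e_0$. Then for every odd integer $a$ there are $\alpha,\rho\in K_2$ with $v_2(\alpha)=a$, $v_2(\rho)=a+(b_2-b_1)$ such that $\mu:=(\sigma+1)\alpha-\rho$ lies in $K_1$ and $v_2(\mu)=a+b_1$. Furthermore, if $a+b_1\equiv 0\pmod 4$, then $\alpha,\rho$ can be chosen so that in addition $\mu\in K_0$.
   Context: $v_2$ is the normalized valuation of $K_2$. The lower ramification break numbers of $\mathrm{Gal}(K_2/K_0)$ are the integers $j\ge1$ with $G_j\ne G_{j+1}$ in the lower-numbering ramification filtration. $(\sigma+1)\alpha=\sigma(\alpha)+\alpha$. *)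

From HB Require Import structures.
From mathcomp Require Import all_boot all_order all_algebra all_fingroup all_field.
Set Implicit Arguments. Unset Strict Implicit. Unset Printing Implicit Defensive.
Import Order.TTheory GRing.Theory Num.Theory.
Local Open Scope ring_scope.

(* Discrete valuations on a field K, given as v : K -> int; the value v 0 is
   irrelevant (v 0 = +oo conventionally), so every statement guards x != 0. *)
Section Val.
Variable K : fieldType.
Variable v : K -> int.

Definition vge (x : K) (n : int) : Prop := x = 0 \/ n <= v x.

Definition vint (x : K) : Prop := vge x 0.

Definition normalized_dvaluation : Prop :=
  [/\ forall x y, x != 0 -> y != 0 -> v (x * y) = v x + v y,
      forall x y, x != 0 -> y != 0 -> x + y != 0 -> Num.min (v x) (v y) <= v (x + y)
    & exists pi, pi != 0 /\ v pi = 1].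

Definition vcomplete : Prop :=
  forall u : nat -> K,
    (forall N : int, exists M, forall m n, (M <= m)%N -> (M <= n)%N -> vge (u m - u n) N) ->
    exists l, forall N : int, exists M, forall n, (M <= n)%N -> vge (u n - l) N.

Definition finite_residue : Prop :=
  exists s : seq K, (forall r, r \in s -> vint r) /\
    forall x, vint x -> exists2 r, r \in s & vge (x - r) 1.

(* K is a finite extension of Q_2 equipped with its normalized valuation v:
   characteristic 0, complete, finite residue field of characteristic 2. *)
Definition two_adic_local_field : Prop :=
  [/\ [pchar K] =i pred0, normalized_dvaluation, vcomplete, finite_residue
    & 0 < v 2%:R].
End Val.

Section Ram.
Variables (F : fieldType) (L : splittingFieldType F) (v : L -> int).

Definition in_ram_group (i : int) (s : gal_of {:L}) : Prop :=
  forall x, vint v x -> vge v (s x - x) (i + 1).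

Definition lower_break (j : int) : Prop :=
  1 <= j /\ exists2 s, s \in 'Gal({:L} / 1%AS)%g &
    ~ (in_ram_group j s <-> in_ram_group (j + 1) s).
End Ram.

From HB Require Import structures.
From mathcomp Require Import all_boot all_order all_algebra all_fingroup all_field.
From mathcomp Require Import zify ring.
Import Order.TTheory GRing.Theory Num.Theory.
Set Implicit Arguments. Unset Strict Implicit. Unset Printing Implicit Defensive.
Local Open Scope ring_scope.

(* Let pi be a uniformizer of K2.  Since K2/K0 is totally ramified of degree 4,
   the terms of a K0-combination of 1, pi, pi^2, pi^3 have valuations in distinct
   classes mod 4, so its valuation is the minimal one.  Hence these powers form a
   basis, every automorphism s preserves v, and v (s z - z) = v z + v (s pi - pi) - 1
   when v z is odd and v (s pi - pi) >= 2.  Put pi1 = pi * sigma^2 pi, so that K1 = K0 + K0 pi1 and every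
   element of K2 is u + w pi with u, w in K1.  For alpha of odd valuation write
   (sigma + 1) alpha = u + w pi; applying sigma^2 - 1 and using
   (sigma^2 - 1)(sigma + 1) = (sigma + 1)(sigma^2 + 1) - 2 (sigma + 1) yields
   v (w pi) = v alpha + 2 e0 and then v u = v alpha + b1, so rho = w pi and mu = u.
   If a + b1 = 0 mod 4, a K0-multiple of pi^j with j + b1 = 2 mod 4 removes the
   pi1-component of mu, which then lies in K0. *)

Section QuarticExtension.
Variables (F : fieldType) (L : splittingFieldType F) (v : L -> int).
Hypothesis valM : forall x y : L, x != 0 -> y != 0 -> v (x * y) = v x + v y.
Hypothesis valD : forall x y : L, x != 0 -> y != 0 -> x + y != 0 ->
  Num.min (v x) (v y) <= v (x + y).

Definition vexact (x : L) (n : int) := x != 0 /\ v x = n.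

Lemma val1 : v 1 = 0.
Proof.
have one0 : (1 : L) != 0 := oner_neq0 _.
by have := valM one0 one0; rewrite mulr1; lia.
Qed.

Lemma valN (x : L) : v (- x) = v x.
Proof.
have [->|x0] := eqVneq x 0; first by rewrite oppr0.
have N1 : (-1 : L) != 0 by rewrite oppr_eq0 oner_neq0.
have := valM N1 N1; rewrite mulrNN mulr1 val1 => vN1.
by rewrite -mulN1r valM // (_ : v (-1) = 0) ?add0r //; lia.
Qed.

Lemma valX (x : L) (n : nat) : x != 0 -> v (x ^+ n) = n%:Z * v x.
Proof.
move=> x0; elim: n => [|n IH]; first by rewrite expr0 val1 mul0r.
by rewrite exprS valM ?expf_neq0 // IH; lia.
Qed.

Lemma valXz (x : L) (n : int) : x != 0 -> v (x ^ n) = n * v x.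
Proof.
move=> x0; case: n => n; first exact: valX.
have := valM (expf_neq0 n.+1 x0) (invr_neq0 (expf_neq0 n.+1 x0)).
rewrite NegzE -exprnN mulfV ?expf_neq0 // val1 valX // => /esym/eqP.
by rewrite addrC addr_eq0 mulNr => /eqP.
Qed.

Lemma vgeW (x : L) n m : vge v x n -> m <= n -> vge v x m.
Proof. by case=> [->|h] hm; [left|right; lia]. Qed.

Lemma vge_val (x : L) : vge v x (v x). Proof. by right. Qed.

Lemma vge_le (x : L) n : x != 0 -> vge v x n -> n <= v x.
Proof. by move=> /eqP x0 []. Qed.

Lemma vgeD (x y : L) n : vge v x n -> vge v y n -> vge v (x + y) n.
Proof.
have [->|x0] := eqVneq x 0; first by rewrite add0r.
have [->|y0] := eqVneq y 0; first by rewrite addr0.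
have [s0 _ _|s0] := eqVneq (x + y) 0; first by left.
case=> [/eqP|hx]; first by rewrite (negPf x0).
case=> [/eqP|hy]; first by rewrite (negPf y0).
by right; have := valD x0 y0 s0; lia.
Qed.

Lemma vgeN (x : L) n : vge v x n -> vge v (- x) n.
Proof. by case=> [->|h]; [rewrite oppr0; left|right; rewrite valN]. Qed.

Lemma vgeM (x y : L) n m : vge v x n -> vge v y m -> vge v (x * y) (n + m).
Proof.
have [->|x0] := eqVneq x 0; first by rewrite mul0r; left.
have [->|y0] := eqVneq y 0; first by rewrite mulr0; left.
case=> [/eqP|hx]; first by rewrite (negPf x0).
case=> [/eqP|hy]; first by rewrite (negPf y0).
by right; rewrite valM //; lia.
Qed.

Lemma vge_sum (I : Type) (r : seq I) (P : pred I) (G : I -> L) n :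
  (forall i, P i -> vge v (G i) n) -> vge v (\sum_(i <- r | P i) G i) n.
Proof. by move=> h; apply: (big_ind (vge v ^~ n)); [left|move=> x y; exact: vgeD|]. Qed.

Lemma vgeX (x : L) (k : nat) n : vge v x n -> vge v (x ^+ k) (k%:Z * n).
Proof.
move=> h; elim: k => [|k IH]; first by rewrite expr0 mul0r; right; rewrite val1.
by rewrite exprS; apply: vgeW (vgeM h IH) _; lia.
Qed.

Lemma vge_subXX (x y : L) D (j : nat) : vge v x 1 -> vge v y 1 -> vge v (x - y) D ->
  vge v (x ^+ j - y ^+ j) (D + j%:Z - 1).
Proof.
move=> hx hy hD; case: j => [|j]; first by rewrite !expr0 subrr; left.
rewrite subrXX; apply: vgeW (vgeM hD (_ : vge v _ j%:Z)) _; last lia.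
apply: vge_sum => i _; apply: vgeW (vgeM (vgeX _ hx) (vgeX i hy)) _.
by have := ltn_ord i; lia.
Qed.

Lemma vexactD (x y : L) n : vexact x n -> vge v y (n + 1) -> vexact (x + y) n.
Proof.
case=> x0 <-; have [->|y0] := eqVneq y 0; first by rewrite addr0.
case=> [/eqP|hy]; first by rewrite (negPf y0).
have [s0|s0] := eqVneq (x + y) 0.
  by move: hy; rewrite (_ : y = - x) ?valN; [lia|apply/eqP; rewrite -addr_eq0 addrC s0].
split=> //; have := valD x0 y0 s0.
have := valD s0 (_ : - y != 0); rewrite oppr_eq0 addrK valN => /(_ y0 x0); lia.
Qed.

Lemma vexactDl (x y : L) n : vge v x (n + 1) -> vexact y n -> vexact (x + y) n.
Proof. by move=> hx hy; rewrite addrC; apply: vexactD. Qed.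

Lemma vexactM (x y : L) n m : vexact x n -> vexact y m -> vexact (x * y) (n + m).
Proof. by case=> x0 <- [y0 <-]; split; [rewrite mulf_neq0|rewrite valM]. Qed.

Lemma vexactN (x : L) n : vexact x n -> vexact (- x) n.
Proof. by case=> x0 <-; split; [rewrite oppr_eq0|rewrite valN]. Qed.

Lemma vexact_vge (x : L) n : vexact x n -> vge v x n.
Proof. by case=> _ <-; right. Qed.

Lemma vexact_le (x : L) n m : vexact x n -> vge v x m -> m <= n.
Proof. by case=> x0 <-; apply: vge_le. Qed.

Lemma alg_neq0 (c : F) : c != 0 -> c%:A != 0 :> L.
Proof. by move=> c0; rewrite scaler_eq0 negb_or c0 oner_neq0. Qed.

Definition valF (c : F) := v c%:A.

Lemma valF_div (a c : F) : a != 0 -> c != 0 -> valF (a / c) = valF a - valF c.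
Proof.
move=> a0 c0; have e : (a / c)%:A * c%:A = a%:A :> L by rewrite mulr_algl scalerA divfK.
apply/eqP; rewrite eq_sym subr_eq /valF -e valM //.
by rewrite alg_neq0 // mulf_neq0 ?invr_neq0.
by rewrite alg_neq0.
Qed.

Section TotallyRamified.
Hypothesis valF4 : forall c : F, c != 0 -> (4 %| valF c)%Z.
Hypothesis dimL : \dim {:L} = 4%N.

Lemma valZ (c : F) (x : L) : c != 0 -> x != 0 -> v (c *: x) = valF c + v x.
Proof. by move=> c0 x0; rewrite -[c *: x]mulr_algl valM ?alg_neq0. Qed.

Definition graded (X : 4.-tuple L) := forall i : 'I_4, vexact X`_i i.

Definition dominant (c : 'I_4 -> F) (i : 'I_4) :=
  c i != 0 /\ forall j, j != i -> c j != 0 -> valF (c i) + i < valF (c j) + j.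

Lemma dominant_le c i j : dominant c i -> c j != 0 ->
  valF (c i) + i <= valF (c j) + j.
Proof.
case=> _ lt_ci cj; have [->//|ji] := eqVneq j i.
exact/ltW/lt_ci.
Qed.

(* The valuations valF (c j) + j of nonzero terms are pairwise distinct mod 4. *)
Lemma exists_dominant (c : 'I_4 -> F) i0 : c i0 != 0 -> exists i, dominant c i.
Proof.
move=> ci0; pose f j := valF (c j) + (j : nat)%:Z.
case: (arg_minP f (P := fun j => c j != 0) ci0) => i ci min_f; exists i; split=> // j ji cj.
have neq_ij : (j : nat) <> i by move/val_inj; apply/eqP.
have := min_f j cj; have := valF4 ci; have := valF4 cj.
by have := ltn_ord i; have := ltn_ord j; rewrite /f; lia.
Qed.

Lemma graded_sum_val X c i : graded X -> dominant c i ->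
  vexact (\sum_j c j *: X`_j) (valF (c i) + i).
Proof.
move=> gX [ci lt_ci]; have termE j : c j != 0 -> v (c j *: X`_j) = valF (c j) + j.
  by case: (gX j) => Xj0 vXj cj; rewrite valZ // vXj.
rewrite (bigD1 i) //=; apply: vexactD.
  by split; [rewrite scaler_eq0 negb_or ci; case: (gX i)|rewrite termE].
apply: vge_sum => j ji; have [->|cj] := eqVneq (c j) 0; first by rewrite scale0r; left.
by right; rewrite termE //; have := lt_ci j ji cj; lia.
Qed.

Lemma sum_coef_neq0 (X : 4.-tuple L) (c : 'I_4 -> F) :
  \sum_j c j *: X`_j != 0 -> exists i, c i != 0.
Proof.
case: (pickP (fun i => c i != 0)) => [i ci _|c0]; first by exists i.
by rewrite big1 ?eqxx // => j _; move/negbFE/eqP: (c0 j) => ->; rewrite scale0r.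
Qed.

Lemma graded_basis X : graded X -> basis_of fullv X.
Proof.
move=> gX; rewrite basisEfree subvf size_tuple dimL leqnn !andbT.
apply/freeP => c c0 i; have [//|ci] := eqVneq (c i) 0.
have [j /(graded_sum_val gX) [+ _]] := exists_dominant ci.
by rewrite c0 eqxx.
Qed.

Lemma graded_coordE X z : graded X -> z = \sum_j coord X j z *: X`_j.
Proof. by move=> gX; apply: coord_basis (graded_basis gX) (memvf z). Qed.

Definition powers (x : L) : 4.-tuple L := [tuple x ^+ j | j < 4].

Lemma powers_graded x : vexact x 1 -> graded (powers x).
Proof.
by case=> x0 vx j; rewrite nth_mktuple; split; [rewrite expf_neq0|rewrite valX // vx mulr1].
Qed.

Lemma sum_powers (c : 'I_4 -> F) x :
  \sum_j c j *: (powers x)`_j = \sum_(j < 4) c j *: x ^+ j.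
Proof. by apply: eq_bigr => j _; rewrite nth_mktuple. Qed.

Lemma gal_alg (s : gal_of {:L}) (c : F) : s c%:A = c%:A.
Proof. by rewrite -[c%:A]mulr1 mulr_algl linearZ /= rmorph1. Qed.

Lemma gal_sum_powers (s : gal_of {:L}) (c : 'I_4 -> F) x :
  s (\sum_(j < 4) c j *: x ^+ j) = \sum_(j < 4) c j *: s x ^+ j.
Proof. by rewrite linear_sum; apply: eq_bigr => j _; rewrite linearZ rmorphXn. Qed.

Variable pi : L.
Hypothesis pi_unif : vexact pi 1.

Definition pi_coord z j : F := coord (powers pi) j z.

Lemma pi_expansion z : z = \sum_(j < 4) pi_coord z j *: pi ^+ j.
Proof. by rewrite -sum_powers; apply/graded_coordE/powers_graded. Qed.

Lemma pi_coord_val z : z != 0 ->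
  exists2 i, dominant (pi_coord z) i & v z = valF (pi_coord z i) + i.
Proof.
rewrite {1 3}(pi_expansion z) -sum_powers => /sum_coef_neq0 [i0 /exists_dominant [i di]].
by exists i => //; case: (graded_sum_val (powers_graded pi_unif) di).
Qed.

Lemma val_le_pi_coord z j : z != 0 -> pi_coord z j != 0 ->
  v z <= valF (pi_coord z j) + j.
Proof. by move=> /pi_coord_val [i di ->]; apply: dominant_le. Qed.

Lemma eisenstein : exists c : 'I_4 -> F,
  [/\ pi ^+ 4 = \sum_(j < 4) c j *: pi ^+ j, vexact (c ord0)%:A 4 &
      forall j : 'I_4, j != ord0 -> c j != 0 -> 4 <= valF (c j)].
Proof.
case: pi_unif => pi0 vpi; have pi4 : pi ^+ 4 != 0 by rewrite expf_neq0.
have [i [ci lt_ci]] := pi_coord_val pi4.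
rewrite valX // vpi => vi.
have i0 : i = ord0.
  by apply/val_inj => /=; have := valF4 ci; have := ltn_ord i; lia.
rewrite i0 addr0 mulr1 in ci lt_ci vi.
exists (pi_coord (pi ^+ 4)); split; [exact: pi_expansion|by split; [apply: alg_neq0|]|].
move=> j j0 cj; have := lt_ci j j0 cj; have := valF4 cj; have := ltn_ord j.
by rewrite -vi; lia.
Qed.

Lemma val_gal_pi (s : gal_of {:L}) : vexact (s pi) 1.
Proof.
have [c [pi4E [c00 vc0] vcj]] := eisenstein.
have r0 : s pi != 0 by rewrite fmorph_eq0; case: pi_unif.
have rel : s pi ^+ 4 = (c ord0)%:A + \sum_(j < 4 | j != ord0) c j *: s pi ^+ j.
  rewrite -rmorphXn pi4E; apply: etrans (gal_sum_powers s c pi) _.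
  by rewrite (bigD1 ord0) //= expr0.
split=> //; move: r0 rel; set r := s pi => r0 rel.
have vge_tail n : (forall j : 'I_4, j != ord0 -> c j != 0 ->
    n <= valF (c j) + (j : nat)%:Z * v r) ->
  vge v (\sum_(j < 4 | j != ord0) c j *: r ^+ j) n.
  move=> h; apply: vge_sum => j j0.
  have [->|cj] := eqVneq (c j) 0; first by rewrite scale0r; left.
  by right; rewrite valZ ?expf_neq0 // valX //; apply: h.
have vr4 : vexact (r ^+ 4) (4 * v r) by split; [rewrite expf_neq0|rewrite valX].
have [le0|gt0] := lerP (v r) 0.
  suff: vge v (r ^+ 4) (4 * v r + 1) by move/(vexact_le vr4); lia.
  rewrite rel; apply: vgeD; first by right; rewrite vc0; lia.
  by apply: vge_tail => j j0 cj; have := vcj j j0 cj; have := ltn_ord j; nia.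
have [ge2|] := lerP 2 (v r); last lia.
suff: vexact (r ^+ 4) 4 by case=> _; case: vr4 => _ ->; lia.
rewrite rel; apply: vexactD; first by [].
apply: vge_tail => j j0 cj; have := vcj j j0 cj.
have j_gt0 : (0 < j)%N by rewrite lt0n.
by nia.
Qed.

Lemma val_gal (s : gal_of {:L}) z : v (s z) = v z.
Proof.
have [->|z0] := eqVneq z 0; first by rewrite rmorph0.
have [i di vz] := pi_coord_val z0.
have sz : s z = \sum_j pi_coord z j *: (powers (s pi))`_j.
  by rewrite sum_powers {1}(pi_expansion z) gal_sum_powers.
by rewrite vz sz; case: (graded_sum_val (powers_graded (val_gal_pi s)) di).
Qed.

Lemma vexact_gal (s : gal_of {:L}) x n : vexact (s x) n <-> vexact x n.
Proof. by rewrite /vexact fmorph_eq0 val_gal. Qed.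

Lemma gal_sub_expansion (s : gal_of {:L}) z :
  s z - z = \sum_(j < 4) pi_coord z j *: (s pi ^+ j - pi ^+ j).
Proof.
have -> : s z = \sum_(j < 4) pi_coord z j *: s pi ^+ j.
  by rewrite {1}(pi_expansion z); exact: gal_sum_powers.
rewrite [X in _ - X](pi_expansion z) -sumrB.
by apply: eq_bigr => j _; rewrite scalerBr.
Qed.

Lemma vge_gal_sub_term (s : gal_of {:L}) D (c : F) (j : nat) :
  vge v (s pi - pi) D -> c != 0 ->
  vge v (c *: (s pi ^+ j - pi ^+ j)) (valF c + (D + j%:Z - 1)).
Proof.
move=> hD c0; rewrite -mulr_algl; apply: vgeM; first exact: vge_val.
by apply: vge_subXX hD; right; [case: (val_gal_pi s) => _ ->|case: pi_unif => _ ->].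
Qed.

Lemma vge_gal_sub (s : gal_of {:L}) D z : vge v (s pi - pi) D -> z != 0 ->
  vge v (s z - z) (v z + D - 1).
Proof.
move=> hD z0; rewrite gal_sub_expansion; apply: vge_sum => j _.
have [->|cj] := eqVneq (pi_coord z j) 0; first by rewrite scale0r; left.
apply: vgeW (vge_gal_sub_term j hD cj) _.
by have := val_le_pi_coord z0 cj; lia.
Qed.

Lemma vge_gal_sub_int (s : gal_of {:L}) D z : vge v (s pi - pi) D -> vint v z ->
  vge v (s z - z) D.
Proof.
move=> hD; have [->|z0] := eqVneq z 0; first by rewrite rmorph0 subrr; left.
case=> [/eqP|vz]; first by rewrite (negPf z0).
rewrite gal_sub_expansion; apply: vge_sum => j _.
have [->|cj] := eqVneq (pi_coord z j) 0; first by rewrite scale0r; left.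
have [j0|jn0] := eqVneq (nat_of_ord j) 0%N; first by rewrite j0 !expr0 subrr scaler0; left.
apply: vgeW (vge_gal_sub_term j hD cj) _.
have := val_le_pi_coord z0 cj; have := valF4 cj; have := ltn_ord j; move: jn0; lia.
Qed.

Lemma in_ram_groupE (j : int) (s : gal_of {:L}) :
  in_ram_group v j s <-> vge v (s pi - pi) (j + 1).
Proof.
split=> [|hs x /(vge_gal_sub_int hs)] //.
by apply; right; case: pi_unif => _ ->.
Qed.

Lemma lower_break_val (j : int) : lower_break v j ->
  exists2 s, s \in 'Gal({:L} / 1%AS)%g & vexact (s pi - pi) (j + 1).
Proof.
case=> _ [s sG]; rewrite !in_ram_groupE => not_break; exists s => //.
have [d0|d0] := eqVneq (s pi - pi) 0.
  by case: not_break; rewrite d0; split; left.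
split=> //; have [le1|lt1] := lerP (j + 1) (v (s pi - pi)); last first.
  by case: not_break; split=> -[/eqP|]; rewrite ?(negPf d0) //; lia.
have [le2|lt2] := lerP (j + 1 + 1) (v (s pi - pi)); last lia.
by case: not_break; split=> _; right.
Qed.

Section TwoAdic.
Variable e0 : int.
Hypothesis val2 : v 2%:R = 4 * e0.
Hypothesis e0_gt0 : 0 < e0.
Hypothesis two_neq0 : (2%:R : L) != 0.

Lemma vexact2 : vexact 2%:R (4 * e0). Proof. by []. Qed.

Lemma vexact3 : vexact 3%:R 0.
Proof.
rewrite -addn1 natrD; apply: vexactDl; last by split; [exact: oner_neq0|exact: val1].
by right; rewrite val2; lia.
Qed.

Lemma vexact_subX3 (x y : L) D : vexact (x - y) D -> 2 <= D -> vexact y 1 ->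
  vexact (x ^+ 3 - y ^+ 3) (D + 2).
Proof.
move=> hD D2 hy; have -> : x = y + (x - y) by rewrite addrC subrK.
move: (x - y) hD => d hD.
have -> : (y + d) ^+ 3 - y ^+ 3 = d * (3%:R * y ^+ 2 + (3%:R * y * d + d ^+ 2)).
  by ring.
apply: (vexactM hD); apply: vexactD.
  by move: (vexactM vexact3 (vexactM hy hy)); rewrite -expr2 add0r.
apply: vgeD.
  by apply: vgeW (vgeM (vgeM (vexact_vge vexact3) (vexact_vge hy)) (vexact_vge hD)) _; lia.
by apply: vgeW (vgeX 2 (vexact_vge hD)) _; lia.
Qed.

Lemma vexact_gal_sub_odd (s : gal_of {:L}) D z : vexact (s pi - pi) D -> 2 <= D ->
  z != 0 -> ~~ (2 %| v z)%Z -> vexact (s z - z) (v z + D - 1).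
Proof.
move=> hD D2 z0 odd_z; have [i [ci lt_ci] vz] := pi_coord_val z0.
have i13 : (i = 1 :> nat) \/ (i = 3 :> nat).
  by have := valF4 ci; have := ltn_ord i; move: odd_z; rewrite vz; lia.
rewrite gal_sub_expansion (bigD1 i) //=; apply: vexactD.
  rewrite -mulr_algl (_ : v z + D - 1 = valF (pi_coord z i) + (D + i - 1)); last first.
    by rewrite vz; lia.
  apply: vexactM; first by split; [exact: alg_neq0|].
  case: i13 => ->; first by rewrite !expr1; case: hD => ? vd; split=> //; rewrite vd; lia.
  by rewrite (_ : D + 3%:Z - 1 = D + 2); [apply: vexact_subX3|lia].
apply: vge_sum => j ji.
have [->|cj] := eqVneq (pi_coord z j) 0; first by rewrite scale0r; left.
apply: vgeW (vge_gal_sub_term j (vexact_vge hD) cj) _.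
by have := lt_ci j ji cj; lia.
Qed.

Section CyclicQuartic.
Variable sigma : gal_of {:L}.
Hypothesis gal_cycle : 'Gal({:L} / 1%AS)%g = <[sigma]>%g.
Hypothesis sigma_order : #[sigma]%g = 4%N.

Lemma gal_expE n x : (sigma ^+ n)%g x = iter n sigma x.
Proof.
elim: n => [|n IH]; first by rewrite expg0 gal_id.
by rewrite expgSr galM ?memvf // IH.
Qed.

Lemma sigma4 x : sigma (sigma (sigma (sigma x))) = x.
Proof. by rewrite -[LHS]/(iter 4 sigma x) -gal_expE -sigma_order expg_order gal_id. Qed.

Lemma sigma_sigma3_sub : sigma (sigma (sigma (sigma pi)) - pi) = - (sigma pi - pi).
Proof. by rewrite rmorphB opprB; congr (_ - _); exact: sigma4. Qed.

Lemma lower_break_cases j : lower_break v j ->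
  vexact (sigma pi - pi) (j + 1) \/ vexact (sigma (sigma pi) - pi) (j + 1).
Proof.
move=> /lower_break_val [s]; rewrite gal_cycle => /cycleP [k ->].
rewrite -expg_mod_order sigma_order gal_expE.
have : (k %% 4 < 4)%N by rewrite ltn_mod.
case: (k %% 4)%N => [|[|[|[|//]]]] _ /=.
- by rewrite subrr => -[]; rewrite eqxx.
- by left.
- by right.
move=> /(vexact_gal sigma _ _).2; rewrite sigma_sigma3_sub => /vexactN.
by rewrite opprK; left.
Qed.

Lemma vge_sigma2_sub : vge v (sigma (sigma pi) - pi) (v (sigma pi - pi)).
Proof.
have -> : sigma (sigma pi) - pi = sigma (sigma pi - pi) + (sigma pi - pi).
  by rewrite rmorphB addrA subrK.
by apply: vgeD; right; rewrite ?val_gal.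
Qed.

Variables b1 b2 : int.
Hypothesis breaksE : forall j, lower_break v j <-> j = b1 \/ j = b2.
Hypothesis b1_lt_b2 : b1 < b2.

Lemma breaks_val :
  vexact (sigma pi - pi) (b1 + 1) /\ vexact (sigma (sigma pi) - pi) (b2 + 1).
Proof.
have [h1|h1] := lower_break_cases (proj2 (breaksE b1) (or_introl erefl));
have [h2|h2] := lower_break_cases (proj2 (breaksE b2) (or_intror erefl)) => //;
  case: h1 h2 => n1 e1 [n2 e2]; try lia.
by have := vge_le n1 vge_sigma2_sub; lia.
Qed.

Hypothesis b1_odd : ~~ (2 %| b1)%Z.
Hypothesis b2_odd : ~~ (2 %| b2)%Z.
Hypothesis b2E : b2 = b1 + 2 * e0.
Hypothesis e0_lt_b1 : e0 < b1.

Definition pi1 := pi * sigma (sigma pi).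

Definition lin_pi1 (a b : F) : L := a%:A + b%:A * pi1.

Lemma vexact_pi1 : vexact pi1 2.
Proof. by apply: (vexactM (m := 1) pi_unif); apply/vexact_gal/vexact_gal. Qed.

Lemma sigma2_pi1 : sigma (sigma pi1) = pi1.
Proof.
transitivity (sigma (sigma pi) * sigma (sigma (sigma (sigma pi)))).
  by rewrite !rmorphM.
by rewrite sigma4 mulrC.
Qed.

Lemma sigma2_lin_pi1 a b : sigma (sigma (lin_pi1 a b)) = lin_pi1 a b.
Proof.
transitivity (sigma (sigma a%:A) + sigma (sigma b%:A) * sigma (sigma pi1)).
  by rewrite !rmorphD !rmorphM.
by rewrite !gal_alg sigma2_pi1.
Qed.

Lemma lin_pi1_subZ a b c d k :
  lin_pi1 a b - k%:A * lin_pi1 c d = lin_pi1 (a - k * c) (b - k * d).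
Proof. by rewrite /lin_pi1 -!in_algE !rmorphB !rmorphM; ring. Qed.

Definition K1_frame : 4.-tuple L := [tuple pi1 ^+ j./2 * pi ^+ odd j | j < 4].

Lemma K1_frame_graded : graded K1_frame.
Proof.
case: vexact_pi1 pi_unif => p10 vp1 [pi0 vpi] j; rewrite nth_mktuple.
split; first by rewrite mulf_neq0 ?expf_neq0.
by rewrite valM ?expf_neq0 // !valX // vp1 vpi; case: j => [[|[|[|[|?]]]] ?].
Qed.

Lemma K2_decomp z : exists a0 a1 a2 a3 : F, z = lin_pi1 a0 a2 + lin_pi1 a1 a3 * pi.
Proof.
exists (coord K1_frame ord0 z), (coord K1_frame (lift ord0 ord0) z),
  (coord K1_frame (lift ord0 (lift ord0 ord0)) z),
  (coord K1_frame (lift ord0 (lift ord0 (lift ord0 ord0))) z).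
rewrite {1}(graded_coordE z K1_frame_graded).
under eq_bigr => j _ do rewrite -mulr_algl.
by rewrite !big_ord_recl big_ord0 !nth_mktuple /= /lin_pi1; ring.
Qed.

Lemma sigma2_subE u w : sigma (sigma u) = u -> sigma (sigma w) = w ->
  sigma (sigma (u + w * pi)) - (u + w * pi) = w * (sigma (sigma pi) - pi).
Proof.
move=> hu hw; transitivity (sigma (sigma u) + sigma (sigma w) * sigma (sigma pi) - (u + w * pi)).
  by rewrite !rmorphD !rmorphM.
by rewrite hu hw; ring.
Qed.

Lemma sigma2_fixed_lin z : sigma (sigma z) = z -> exists a b, z = lin_pi1 a b.
Proof.
have [a0 [a1 [a2 [a3 ->]]]] := K2_decomp z => /eqP.
rewrite -subr_eq0 sigma2_subE ?sigma2_lin_pi1 // mulf_eq0.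
have [d0 _] := proj2 breaks_val; rewrite (negPf d0) orbF => /eqP ->.
by exists a0, a2; rewrite mul0r addr0.
Qed.

Lemma val_lin_pi1 a b : lin_pi1 a b != 0 ->
  (b != 0 -> v (lin_pi1 a b) <= valF b + 2) /\
  (a != 0 /\ v (lin_pi1 a b) = valF a \/ b != 0 /\ v (lin_pi1 a b) = valF b + 2).
Proof.
rewrite /lin_pi1; have [->|b0] := eqVneq b 0.
  rewrite scale0r mul0r addr0 => a0; split=> //; left.
  by split=> //; apply: contraNneq a0 => ->; rewrite scale0r eqxx.
have [tb0 vtb] : vexact (b%:A * pi1) (valF b + 2).
  exact: vexactM (conj (alg_neq0 b0) erefl) vexact_pi1.
have [->|a0 _] := eqVneq a 0; first by rewrite scale0r add0r vtb; split; [|right].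
have := valF4 a0; have := valF4 b0 => vb4 va4.
have [lt_ab|le_ba] := ltrP (valF a) (valF b + 2).
  have [_ ->] : vexact (a%:A + b%:A * pi1) (valF a).
    by apply: vexactD; [split; [exact: alg_neq0|]|right; lia].
  by split; [move=> _; lia|left].
have [_ ->] : vexact (a%:A + b%:A * pi1) (valF b + 2).
  by apply: vexactDl; [right; rewrite -/(valF a); lia|split].
by split; [|right].
Qed.

Lemma val_lin_pi1_even a b : lin_pi1 a b != 0 -> (2 %| v (lin_pi1 a b))%Z.
Proof.
case/val_lin_pi1=> _ [[a0 ->]|[b0 ->]]; [have := valF4 a0|have := valF4 b0]; lia.
Qed.

(* pi + sigma^2 pi lies in K1, hence has even valuation; if b2 >= 4 e0 it would
   have valuation 4 e0 + 1. *)
Lemma b2_lt_4e0 : b2 < 4 * e0.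
Proof.
have [a [b tE]] : exists a b, pi + sigma (sigma pi) = lin_pi1 a b.
  apply: sigma2_fixed_lin.
  transitivity (sigma (sigma pi) + sigma (sigma (sigma (sigma pi)))).
    by rewrite !rmorphD.
  by rewrite sigma4 addrC.
rewrite ltNge; apply/negP => b2_ge.
have : vexact (pi + sigma (sigma pi)) (4 * e0 + 1).
  rewrite (_ : pi + _ = 2%:R * pi + (sigma (sigma pi) - pi)); last by ring.
  apply: vexactD; first exact: vexactM vexact2 pi_unif.
  by case: (proj2 breaks_val) => _ v2; right; rewrite v2; move: b2_odd; lia.
by rewrite tE => -[nz vt]; have := val_lin_pi1_even nz; rewrite vt; lia.
Qed.

Lemma b1_lt_2e0 : b1 < 2 * e0.
Proof. by have := b2_lt_4e0; rewrite b2E; lia. Qed.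

Lemma vge_sigma2_gal_sub : vge v ((sigma ^+ 2)%g pi - pi) (b2 + 1).
Proof. by rewrite gal_expE; exact: vexact_vge (proj2 breaks_val). Qed.

Lemma vge_sigma_sub_pi1 : vge v (sigma pi1 - pi1) (2 + 2 * b1).
Proof.
have [[d0 vd] _] := breaks_val.
have vC : vge v (sigma (sigma (sigma pi)) - pi) (b1 + 1).
  by right; rewrite -vd -[X in _ <= X](val_gal sigma) sigma_sigma3_sub valN.
have vCB : vge v (sigma (sigma (sigma pi)) - sigma (sigma pi) - (sigma pi - pi)) (b1 + 1 + b2).
  (* This is (sigma^2 - 1) (sigma pi - pi). *)
  have := vge_gal_sub vge_sigma2_gal_sub d0; rewrite !gal_expE /= !rmorphB.
  by rewrite vd => /vgeW; apply; lia.
move: vC vCB; set A := sigma pi; set B := sigma (sigma pi); set C := sigma (sigma (sigma pi)).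
move=> vC vCB; have -> : sigma pi1 = A * C by rewrite rmorphM.
have -> : A * C - pi1 = 2%:R * pi * (A - pi) + (A - pi) * (C - pi) + pi * (C - B - (A - pi)).
  by rewrite /pi1 -/B; ring.
have [_ vpi] := pi_unif; have := b1_lt_2e0 => b1_lt.
apply: vgeD; [apply: vgeD|].
- apply: vgeW (vgeM (vgeM (vexact_vge vexact2) (vge_val pi)) (vge_val (A - pi))) _.
  by rewrite vpi vd; lia.
- by apply: vgeW (vgeM (vge_val (A - pi)) vC) _; rewrite vd; lia.
- by apply: vgeW (vgeM (vge_val pi) vCB) _; rewrite vpi; lia.
Qed.

Lemma vge_sigma_sub_K1 beta N : sigma (sigma beta) = beta -> vge v beta N ->
  vge v (sigma beta - beta) (N + 2 * b1).
Proof.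
move=> /sigma2_fixed_lin [a [b ->]] hN.
have [->|nz] := eqVneq (lin_pi1 a b) 0; first by rewrite rmorph0 subrr; left.
have -> : sigma (lin_pi1 a b) - lin_pi1 a b = b%:A * (sigma pi1 - pi1).
  transitivity (sigma a%:A + sigma b%:A * sigma pi1 - lin_pi1 a b).
    by rewrite rmorphD rmorphM.
  by rewrite !gal_alg /lin_pi1; ring.
have [->|b0] := eqVneq b 0; first by rewrite scale0r mul0r; left.
apply: vgeW (vgeM (vge_val b%:A) vge_sigma_sub_pi1) _.
have [/(_ b0) vb _] := val_lin_pi1 nz.
by have := vge_le nz hN; rewrite /valF in vb; lia.
Qed.

Lemma vexact_trace alpha : alpha != 0 -> ~~ (2 %| v alpha)%Z ->
  vexact (sigma alpha + alpha) (v alpha + b1).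
Proof.
move=> a0 a_odd; have [d1 _] := breaks_val; have := b1_lt_2e0 => b1_lt.
rewrite (_ : _ + alpha = (sigma alpha - alpha) + 2%:R * alpha); last by ring.
apply: vexactD.
  by rewrite (_ : _ + b1 = v alpha + (b1 + 1) - 1); [apply: vexact_gal_sub_odd => //|]; lia.
by apply: vgeW (vexact_vge (vexactM vexact2 (conj a0 erefl))) _; lia.
Qed.

Lemma vexact_sigma2_sub_trace alpha : alpha != 0 -> ~~ (2 %| v alpha)%Z ->
  vexact (sigma (sigma (sigma alpha + alpha)) - (sigma alpha + alpha))
         (v alpha + b1 + 4 * e0).
Proof.
move=> a0 a_odd; have := b2_lt_4e0 => b2_lt.
set beta := sigma (sigma alpha) + alpha.
have beta_ge : vge v beta (v alpha + b2).
  rewrite /beta (_ : _ + alpha = (sigma (sigma alpha) - alpha) + 2%:R * alpha); last by ring.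
  apply: vgeD.
    by have := vge_gal_sub vge_sigma2_gal_sub a0; rewrite gal_expE => /vgeW; apply; lia.
  by apply: vgeW (vgeM (vexact_vge vexact2) (vge_val alpha)) _; lia.
have beta_fixed : sigma (sigma beta) = beta.
  transitivity (sigma (sigma (sigma (sigma alpha))) + sigma (sigma alpha)).
    by rewrite !rmorphD.
  by rewrite sigma4 addrC.
have tr_beta : vge v (sigma beta + beta) (v alpha + b1 + 4 * e0 + 1).
  rewrite (_ : sigma beta + beta = (sigma beta - beta) + 2%:R * beta); last by ring.
  apply: vgeD; first by apply: vgeW (vge_sigma_sub_K1 beta_fixed beta_ge) _; lia.
  by apply: vgeW (vgeM (vexact_vge vexact2) beta_ge) _; lia.
have -> : sigma (sigma (sigma alpha + alpha)) - (sigma alpha + alpha) =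
          - (2%:R * (sigma alpha + alpha)) + (sigma beta + beta).
  transitivity (sigma (sigma (sigma alpha)) + sigma (sigma alpha) - (sigma alpha + alpha)).
    by rewrite !rmorphD.
  by rewrite /beta rmorphD; ring.
apply: vexactD tr_beta; apply: vexactN.
rewrite (_ : _ + 4 * e0 = 4 * e0 + (v alpha + b1)); last lia.
exact: vexactM vexact2 (vexact_trace a0 a_odd).
Qed.

Lemma val_sigma_add_parts alpha u w : alpha != 0 -> ~~ (2 %| v alpha)%Z ->
  sigma (sigma u) = u -> sigma (sigma w) = w -> sigma alpha + alpha = u + w * pi ->
  vexact (w * pi) (v alpha + 2 * e0) /\ vexact u (v alpha + b1).
Proof.
move=> a0 a_odd hu hw split_eq; have [[pi0 vpi] [d20 vd2]] := (pi_unif, proj2 breaks_val).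
have := vexact_sigma2_sub_trace a0 a_odd; rewrite split_eq sigma2_subE // => -[wd0 vwd].
have w0 : w != 0 by move: wd0; rewrite mulf_eq0 negb_or => /andP [].
have vwpi : vexact (w * pi) (v alpha + 2 * e0).
  by split; [rewrite mulf_neq0|move: vwd; rewrite !valM // vpi vd2; lia].
split=> //; have -> : u = (sigma alpha + alpha) - w * pi by rewrite split_eq addrK.
apply: vexactD (vexact_trace a0 a_odd) _; apply: vgeN.
by apply: vgeW (vexact_vge vwpi) _; have := b1_lt_2e0; lia.
Qed.

Lemma sigma_add_split alpha : alpha != 0 -> ~~ (2 %| v alpha)%Z ->
  exists a0 a1 a2 a3 : F, [/\ sigma alpha + alpha = lin_pi1 a0 a2 + lin_pi1 a1 a3 * pi,
    vexact (lin_pi1 a1 a3 * pi) (v alpha + 2 * e0) & vexact (lin_pi1 a0 a2) (v alpha + b1)].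
Proof.
move=> a0 a_odd; have [c0 [c1 [c2 [c3 split_eq]]]] := K2_decomp (sigma alpha + alpha).
exists c0, c1, c2, c3; split=> //.
all: by case: (val_sigma_add_parts a0 a_odd (sigma2_lin_pi1 _ _) (sigma2_lin_pi1 _ _) split_eq).
Qed.

Lemma sigma2_fixedField x : sigma (sigma x) = x -> x \in fixedField <[(sigma ^+ 2)%g]>%g.
Proof.
move=> hx; apply/fixedFieldP; first exact: memvf.
move=> g /cycleP [k ->]; rewrite -expgM gal_expE.
by elim: k => [|k IH] //; rewrite mulnS /= IH hx.
Qed.

Lemma vexact_pi_exp a : vexact (pi ^ a) a.
Proof. by case: pi_unif => pi0 vpi; split; [rewrite expfz_neq0|rewrite valXz // vpi mulr1]. Qed.

Lemma exists_alpha_rho a : ~~ (2 %| a)%Z -> exists alpha rho : L,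
  [/\ alpha != 0 /\ v alpha = a, rho != 0 /\ v rho = a + (b2 - b1),
      sigma alpha + alpha - rho \in fixedField <[(sigma ^+ 2)%g]>%g &
      sigma alpha + alpha - rho != 0 /\ v (sigma alpha + alpha - rho) = a + b1].
Proof.
move=> a_odd; have [pia0 vpia] := vexact_pi_exp a.
have odd_pia : ~~ (2 %| v (pi ^ a))%Z by rewrite vpia.
have [a0 [a1 [a2 [a3 [split_eq [rho0 vrho] mu]]]]] := sigma_add_split pia0 odd_pia.
rewrite vpia in vrho mu; exists (pi ^ a), (lin_pi1 a1 a3 * pi); rewrite split_eq addrK.
split=> //; last exact/sigma2_fixedField/sigma2_lin_pi1.
by split=> //; apply: (etrans vrho); rewrite b2E; lia.
Qed.

Lemma exists_shift_element : exists t : L, exists c0 c1 c2 c3 : F,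
  [/\ t != 0 /\ ~~ (2 %| v t)%Z, sigma t + t = lin_pi1 c0 c2 + lin_pi1 c1 c3 * pi,
      c2 != 0 & valF c2 = v t + b1 - 2].
Proof.
have [j0 [j0_odd j0b1]] : exists j0 : nat, ~~ (2 %| j0%:Z)%Z /\ (4 %| j0%:Z + b1 - 2)%Z.
  have [h|h] : (4 %| 1%:Z + b1 - 2)%Z \/ (4 %| 3%:Z + b1 - 2)%Z by clear -b1_odd; lia.
  - by exists 1%N.
  - by exists 3%N.
have [t0 vt0] : vexact (pi ^+ j0) j0%:Z.
  by case: pi_unif => pi0 vpi; split; [rewrite expf_neq0|rewrite valX // vpi mulr1].
have odd_t0 : ~~ (2 %| v (pi ^+ j0))%Z by rewrite vt0.
have [c0 [c1 [c2 [c3 [t_split _ [mu0 vmu]]]]]] := sigma_add_split t0 odd_t0.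
exists (pi ^+ j0), c0, c1, c2, c3.
have [_ [[c00 vc]|[c20 vc]]] := val_lin_pi1 mu0.
  by have := valF4 c00; clear -vc vmu vt0 j0b1; lia.
by split=> //; clear -vc vmu; lia.
Qed.

Lemma val_pi1_coef alpha a0 a1 a2 a3 : alpha != 0 -> ~~ (2 %| v alpha)%Z ->
  (4 %| v alpha + b1)%Z -> sigma alpha + alpha = lin_pi1 a0 a2 + lin_pi1 a1 a3 * pi ->
  a2 != 0 -> v alpha + b1 <= valF a2.
Proof.
move=> al0 a_odd a4 split_eq a20.
have [_ [mu0 vmu]] := val_sigma_add_parts al0 a_odd (sigma2_lin_pi1 _ _)
  (sigma2_lin_pi1 _ _) split_eq.
have [/(_ a20)] := val_lin_pi1 mu0; rewrite vmu => le_a2 _.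
by have := valF4 a20; clear -a4 le_a2; lia.
Qed.

(* Subtracting k t, k = a2 / c2, from pi ^ a kills the pi1-coefficient of mu; since
   the a2 pi1 term of mu has valuation at least a + b1 and = 2 mod 4, v (k t) > a. *)
Lemma exists_alpha_rho_K0 a : ~~ (2 %| a)%Z -> (4 %| a + b1)%Z -> exists alpha rho : L,
  [/\ alpha != 0 /\ v alpha = a, rho != 0 /\ v rho = a + (b2 - b1),
      sigma alpha + alpha - rho \in fixedField <[(sigma ^+ 2)%g]>%g,
      sigma alpha + alpha - rho \in 1%VS &
      sigma alpha + alpha - rho != 0 /\ v (sigma alpha + alpha - rho) = a + b1].
Proof.
move=> a_odd a4; have [pia0 vpia] := vexact_pi_exp a.
have [a0 [a1 [a2 [a3 split_eq]]]] := K2_decomp (sigma (pi ^ a) + pi ^ a).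
have [t [c0 [c1 [c2 [c3 [[t0 t_odd] t_split c20 vc2]]]]]] := exists_shift_element.
set k := a2 / c2; have kc2 : k * c2 = a2 by rewrite divfK.
set alpha := pi ^ a - k%:A * t.
have [al0 val] : vexact alpha a.
  apply: vexactD; first by split.
  have [->|k0] := eqVneq k 0; first by rewrite scale0r mul0r oppr0; left.
  have a20 : a2 != 0 by rewrite -kc2 mulf_neq0.
  have := val_pi1_coef pia0 _ _ split_eq a20; rewrite vpia => /(_ a_odd a4) le_a2.
  apply: vgeN; right; rewrite valM ?alg_neq0 // -/(valF k) /k valF_div //.
  by clear -le_a2 vc2; lia.
have alpha_split : sigma alpha + alpha =
    lin_pi1 (a0 - k * c0) (a2 - k * c2) + lin_pi1 (a1 - k * c1) (a3 - k * c3) * pi.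
  transitivity (sigma (pi ^ a) + pi ^ a - k%:A * (sigma t + t)).
    transitivity (sigma (pi ^ a) - sigma k%:A * sigma t + (pi ^ a - k%:A * t)).
      by rewrite rmorphB rmorphM.
    by rewrite gal_alg; ring.
  by rewrite split_eq t_split -!lin_pi1_subZ; ring.
have odd_alpha : ~~ (2 %| v alpha)%Z by rewrite val.
have [[rho0 vrho] mu] := val_sigma_add_parts al0 odd_alpha
  (sigma2_lin_pi1 _ _) (sigma2_lin_pi1 _ _) alpha_split.
rewrite val in vrho mu.
exists alpha, (lin_pi1 (a1 - k * c1) (a3 - k * c3) * pi); rewrite alpha_split addrK.
split=> //.
- by split=> //; apply: (etrans vrho); rewrite b2E; clear; lia.
- exact/sigma2_fixedField/sigma2_lin_pi1.
- by rewrite kc2 subrr /lin_pi1 scale0r mul0r addr0 memvZ // memv_line.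
Qed.

End CyclicQuartic.

End TwoAdic.

End TotallyRamified.

End QuarticExtension.

Theorem lemma3p6
  (K0 : fieldType) (K2 : splittingFieldType K0) (v2 : K2 -> int)
  (sigma : gal_of {:K2}) (e0 b1 b2 : int) :
  two_adic_local_field v2 ->
  v2 2%:R = 4 * e0 ->
  galois 1%AS {:K2} ->
  'Gal({:K2} / 1%AS)%g = <[sigma]>%g ->
  #[sigma]%g = 4%N ->
  (forall x : K0, x != 0 -> (4 %| v2 (in_alg K2 x))%Z) ->
  (forall j, lower_break v2 j <-> j = b1 \/ j = b2) ->
  b1 < b2 ->
  ~~ (2 %| b1)%Z -> ~~ (2 %| b2)%Z ->
  e0 < b1 -> b2 = b1 + 2 * e0 ->
  forall a : int, ~~ (2 %| a)%Z ->
    (exists alpha rho : K2,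
       let mu := sigma alpha + alpha - rho in
       [/\ alpha != 0 /\ v2 alpha = a, rho != 0 /\ v2 rho = a + (b2 - b1),
           mu \in fixedField <[(sigma ^+ 2)%g]>%g & mu != 0 /\ v2 mu = a + b1])
    /\
    ((4 %| a + b1)%Z ->
     exists alpha rho : K2,
       let mu := sigma alpha + alpha - rho in
       [/\ alpha != 0 /\ v2 alpha = a, rho != 0 /\ v2 rho = a + (b2 - b1),
           mu \in fixedField <[(sigma ^+ 2)%g]>%g, mu \in 1%VS
         & mu != 0 /\ v2 mu = a + b1]).
Proof.
move=> [char0 [valM valD [pi [pi0 vpi]]] _ _ v2_gt0] val2 galL gal_cycle sigma_order
  totally_ramified breaksE b1_lt_b2 b1_odd b2_odd e0_lt_b1 b2E a a_odd.
have valF4 : forall c : K0, c != 0 -> (4 %| valF v2 c)%Z.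
  by move=> c /totally_ramified; rewrite in_algE.
have dimL : \dim {:K2} = 4%N.
  have : (\dim_(1%AS : {subfield K2}) {:K2})%N = 4%N.
    by rewrite galois_dim // gal_cycle -sigma_order.
  by rewrite /= dimv1 divn1.
have two_neq0 : (2%:R : K2) != 0 by rewrite (proj1 (pcharf0P K2) char0 2%N).
have e0_gt0 : 0 < e0 by move: v2_gt0; rewrite val2; lia.
have pi_unif : vexact v2 pi 1 by [].
split.
  have [alpha [rho h]] := exists_alpha_rho valM valD valF4 dimL pi_unif val2 e0_gt0
    two_neq0 gal_cycle sigma_order breaksE b1_lt_b2 b1_odd b2_odd b2E e0_lt_b1 a_odd.
  by exists alpha, rho.
move=> a4; have [alpha [rho h]] := exists_alpha_rho_K0 valM valD valF4 dimL pi_unif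
  val2 e0_gt0 two_neq0 gal_cycle sigma_order breaksE b1_lt_b2 b1_odd b2_odd b2E e0_lt_b1
  a_odd a4.
by exists alpha, rho.
Qed.
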